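(* For every integer $n\ge1$ and every positive multiple $m$ of $4$, the graph $G_{n,m}$ is vertex transitive.
   Context: For $m$ a multiple of $4$ and $n\ge1$, $G_{n,m}$ is the simple graph with vertex set $\{i(a,b): i\in\mathbb{Z}_m,\ a,b\in\mathbb{Z}_n\}$ ($n^2m$ vertices; the vertices with first index $i$ form cluster $i$, clusters arranged as the nodes of the cycle $\mathbb{Z}_m$, labelled $0,\dots,m-1$), with an edge between: (1) all pairs $i(a,b),j(c,d)$ with $i$ and $j$ adjacent in $\mathbb{Z}_m$ (''short'' edges); (2) all pairs $i(a,b),j(a,d)$ with $b\ne d$, $i$ even and $j=(i+m/4)\bmod m$; (3) all pairs $i(a,b),j(c,b)$ with $a\ne c$, $i$ even and $j=(i-m/4)\bmod m$; (4) all pairs $i(a,b),j(c,b)$ with $a\ne c$, $i$ odd and $j=(i+m/4)\bmod m$; (5) all pairs $i(a,b),j(a,d)$ with $b\ne d$, $i$ odd and $j=(i-m/4)\bmod m$. *)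

From mathcomp Require Import all_boot all_fingroup.
Set Implicit Arguments. Unset Strict Implicit. Unset Printing Implicit Defensive.

(* Vertex i(a,b) of G_{n,m}: cluster i in Z_m (as 'I_m), a b in Z_n (as 'I_n). *)
Definition vtx (m n : nat) : finType := ('I_m * ('I_n * 'I_n))%type.

Definition cyc_adj (m i j : nat) : bool :=
  (j == (i + 1) %% m) || (i == (j + 1) %% m).

Definition plusq (m i : nat) : nat := (i + m %/ 4) %% m.
Definition minusq (m i : nat) : nat := (i + m - m %/ 4) %% m.

(* Directed version of the edge rules (1)-(5), from x = i(a,b) to y = j(c,d). *)
Definition dedge (m n : nat) (x y : vtx m n) : bool :=
  let i := nat_of_ord x.1 in let a := x.2.1 in let b := x.2.2 in
  let j := nat_of_ord y.1 in let c := y.2.1 in let d := y.2.2 in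
  [|| cyc_adj m i j,
      [&& ~~ odd i, j == plusq m i, a == c & b != d],
      [&& ~~ odd i, j == minusq m i, b == d & a != c],
      [&& odd i, j == plusq m i, b == d & a != c]
    | [&& odd i, j == minusq m i, a == c & b != d]].

Definition Gadj (m n : nat) : rel (vtx m n) := fun x y => dedge x y || dedge y x.

Definition is_graph_aut (T : finType) (e : rel T) (f : {perm T}) : Prop :=
  forall u v, e (f u) (f v) = e u v.

Definition vertex_transitive (T : finType) (e : rel T) : Prop :=
  forall x y : T, exists f : {perm T}, is_graph_aut e f /\ f x = y.

From mathcomp Require Import all_boot all_fingroup.

Set Implicit Arguments.
Unset Strict Implicit.

(* Rotating the cycle of clusters by k preserves cyclic adjacency and the
   offsets +-m/4, and flips the parity of the cluster index exactly when k is
   odd (m is even).  Rules (2)-(5) differ between even and odd clusters only by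
   exchanging the roles of the two coordinates a and b, so an odd rotation
   combined with the swap (a, b) -> (b, a) is an automorphism; so is permuting
   each coordinate independently.  Composing the two, any vertex can be sent to
   any other. *)

Lemma eq_shift_mod (m i j k c : nat) : j < m ->
  ((j + k) %% m == ((i + k) %% m + c) %% m) = (j == (i + c) %% m).
Proof. by move=> lt_jm; rewrite modnDml addnAC eqn_modDr (modn_small lt_jm). Qed.

Lemma minusqE (m i : nat) : minusq m i = (i + (m - m %/ 4)) %% m.
Proof. by rewrite /minusq addnBA // leq_div. Qed.

Section RotateRelabel.

Variables (m n : nat) (m_gt0 : 0 < m) (k : nat) (s t : {perm 'I_n}).

Definition rot_relabel (x : vtx m n) : vtx m n :=
  (Ordinal (ltn_pmod (x.1 + k) m_gt0),
   if odd k then (s x.2.2, t x.2.1) else (s x.2.1, t x.2.2)).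

Lemma rot_relabel_inj : injective rot_relabel.
Proof.
move=> [i [a b]] [j [c d]]; rewrite /rot_relabel /=.
case: (odd k) => -[/eqP eq_ij /perm_inj eq1 /perm_inj eq2];
  have /val_inj -> : val i = val j by
    apply/eqP; move: eq_ij; rewrite eqn_modDr !modn_small.
- by rewrite eq1 eq2.
- by rewrite eq1 eq2.
Qed.

Lemma dedge_rot_relabel (x y : vtx m n) : 2 %| m ->
  dedge (rot_relabel x) (rot_relabel y) = dedge x y.
Proof.
move=> m_even; move: x y => [[i lt_im] [a b]] [[j lt_jm] [c d]].
rewrite /dedge /rot_relabel /cyc_adj /plusq !minusqE /= !eq_shift_mod //.
have odd_m : odd m = false by apply/negbTE; rewrite -dvdn2.
rewrite odd_mod // oddD.
case: (odd k); rewrite /= !(inj_eq perm_inj);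
  move: (j == (i + 1) %% m) (i == (j + 1) %% m) (j == (i + m %/ 4) %% m)
    (j == (i + (m - m %/ 4)) %% m) (a == c) (b == d) (odd i);
  by do 7!case.
Qed.

Definition rot_relabel_perm : {perm vtx m n} := perm rot_relabel_inj.

Lemma rot_relabel_perm_aut : 2 %| m -> is_graph_aut (@Gadj m n) rot_relabel_perm.
Proof. by move=> m_even u v; rewrite /Gadj !permE !dedge_rot_relabel. Qed.

End RotateRelabel.

Lemma rot_relabel_onto (m n : nat) (m_gt0 : 0 < m) (x y : vtx m n) :
  exists k s t, rot_relabel m_gt0 k s t x = y.
Proof.
move: x y => [[i lt_im] [a b]] [[j lt_jm] [c d]].
pose k := j + (m - i).
have shift_ij : (i + k) %% m = j.
  by rewrite /k addnCA subnKC ?(ltnW lt_im) // modnDr modn_small.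
exists k, (if odd k then tperm b c else tperm a c),
  (if odd k then tperm a d else tperm b d).
rewrite /rot_relabel /=.
have -> : Ordinal (ltn_pmod (i + k) m_gt0) = Ordinal lt_jm by apply: val_inj.
by case: (odd k); rewrite !tpermL.
Qed.

Theorem claim4p3 (n m : nat) :
  0 < n -> 0 < m -> 4 %| m -> vertex_transitive (@Gadj m n).
Proof.
move=> _ m_gt0 m4 x y.
have m_even : 2 %| m by apply: dvdn_trans m4.
have [k [s [t xy]]] := rot_relabel_onto m_gt0 x y.
exists (rot_relabel_perm m_gt0 k s t); split.
- exact: rot_relabel_perm_aut.
- by rewrite permE.
Qed.
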